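(* Let $Q:\mathbb{R}_{\ge0}\to\overline{\mathcal Q}_n$ be Riemann-integrable and sufficiently exciting. Then every solution of the linear system $\dot x=-Q_tx$ satisfies $\lim_{t\to\infty}x(t)=0$.
   Context: $\sigma_{\min}$ smallest singular value; $\mathcal Q_n$ symmetric positive semidefinite $n\times n$ matrices; $\overline{\mathcal Q}_n=\{R\in\mathcal Q_n:|R|\le1\}$ with $|\cdot|$ the induced 2-norm. Let $\delta(\varepsilon,T):=\min\{\varepsilon/2,\varepsilon^3/(240T^5)\}$. $Q:\mathbb{R}_{\ge0}\to\mathcal Q_n$ is sufficiently exciting if there is a sequence $(\varepsilon_i,T_i)_{i\ge1}$ of pairs of positive reals with $\sigma_{\min}\big(\int_{t_i}^{t_i+T_i}Q_t\,dt\big)\ge\varepsilon_i$, where $t_1=0$, $t_i=\sum_{j<i}T_j$, and $\sum_{i=1}^\infty\delta(\varepsilon_i,T_i)=\infty$. *)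

From Stdlib Require Import Reals.
From Coquelicot Require Import Coquelicot.
From mathcomp Require Import all_boot all_algebra.
From mathcomp Require Import Rstruct.

Set Implicit Arguments.
Unset Strict Implicit.
Unset Printing Implicit Defensive.

Local Open Scope R_scope.

Definition sqnorm2 (n : nat) (v : 'cV[R]_n) : R :=
  \big[Rplus/0]_(i < n) (v i ord0 * v i ord0).

Definition norm2 (n : nat) (v : 'cV[R]_n) : R := sqrt (sqnorm2 v).

Definition psd_sym (n : nat) (M : 'M[R]_n) : Prop :=
  trmx M = M /\ forall v : 'cV[R]_n, 0 <= ((mulmx (mulmx (trmx v) M) v) ord0 ord0).

Definition opnorm_le1 (n : nat) (M : 'M[R]_n) : Prop :=
  forall v : 'cV[R]_n, norm2 (mulmx M v) <= norm2 v.

Definition Qbar (n : nat) (M : 'M[R]_n) : Prop := psd_sym M /\ opnorm_le1 M.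

(* smallest singular value: sigma_min M = inf_{|v| = 1} |M v|
   (as an extended real; for n = 0 the infimum of the empty set is +oo) *)
Definition sigma_min (n : nat) (M : 'M[R]_n) : Rbar :=
  Glb_Rbar (fun r => exists v : 'cV[R]_n, norm2 v = 1 /\ r = norm2 (mulmx M v)).

Definition mx_RInt (n : nat) (Q : R -> 'M[R]_n) (a b : R) : 'M[R]_n :=
  \matrix_(i < n, j < n) RInt (fun t => Q t i j) a b.

Definition riemann_integrable_nonneg (n : nat) (Q : R -> 'M[R]_n) : Prop :=
  forall (i j : 'I_n) (a b : R), 0 <= a -> a <= b ->
    ex_RInt (fun t => Q t i j) a b.

Definition delta (eps T : R) : R :=
  Rmin (eps / 2) (eps ^ 3 / (240 * T ^ 5)).

(* t_i = sum_{j < i} T_j  (0-indexed, so t_0 = 0) *)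
Definition tseq (T : nat -> R) (i : nat) : R :=
  \big[Rplus/0]_(j < i) T j.

Definition sufficiently_exciting (n : nat) (Q : R -> 'M[R]_n) : Prop :=
  exists (eps T : nat -> R),
    (forall i, 0 < eps i /\ 0 < T i) /\
    (forall i, Rbar_le (Rbar.Finite (eps i))
                 (sigma_min (mx_RInt Q (tseq T i) (tseq T i + T i)))) /\
    is_lim_seq (fun N => \big[Rplus/0]_(i < N) delta (eps i) (T i)) p_infty.

(* (Caratheodory) solution of  x' = - Q_t x  on R_{>=0}:
   x(t) = x(0) - \int_0^t Q_s x(s) ds  for every t >= 0. *)
Definition is_solution (n : nat) (Q : R -> 'M[R]_n) (x : R -> 'cV[R]_n) : Prop :=
  forall (t : R) (i : 'I_n), 0 <= t ->
    ex_RInt (fun s => (mulmx (Q s) (x s)) i ord0) 0 t /\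
    x t i ord0 = x 0 i ord0 - RInt (fun s => (mulmx (Q s) (x s)) i ord0) 0 t.

From Stdlib Require Import Reals.
From Coquelicot Require Import Coquelicot.
From mathcomp Require Import all_boot all_order all_algebra.
From mathcomp Require Import Rstruct.
From mathcomp Require Import ring lra.
Import Order.TTheory GRing.Theory Num.Theory.
Set Implicit Arguments. Unset Strict Implicit. Unset Printing Implicit Defensive.
Local Open Scope ring_scope.

(* Along a solution the energy V(t) = |x(t)|^2 is nonincreasing. On a window
   [a, b] of length T on which M := \int_a^b Q_t dt satisfies |M v| >= eps |v|,
   V drops by at least eps V(a) / (1 + 2 T^2): the decrease of V is twice
   \int x^T Q x, while x(a)^T M x(a) exceeds this integral only through the
   drift |x(t) - x(a)|^2 <= T \int x^T Q x (as |Q_t| <= 1), and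
   x(a)^T M x(a) >= eps V(a) because eps is below the bottom of the spectrum
   of the positive semidefinite matrix M. As x is merely a Caratheodory
   solution and Q merely Riemann integrable, this estimate is established on
   a uniform subdivision of [a, b] into N steps, up to an O(1/N) error.
   Chaining the exciting windows, V(t_N) <= V(0) exp (- sum_k eps_k / (1 + 2 T_k^2)),
   and, since eps_k <= T_k, this sum dominates sum_k delta(eps_k, T_k) / 2 = oo. *)

Lemma sumr_const_ord N (c : R) : \sum_(i < N) c = N%:R * c.
Proof. by rewrite sumr_const card_ord mulr_natl. Qed.

Lemma telescope_sumr_ord (V : zmodType) (f : nat -> V) N :
  f 0%N - f N = \sum_(k < N) (f k - f k.+1).
Proof.
rewrite -opprB -(telescope_sumr f (leq0n N)) big_mkord -sumrN.
by apply: eq_bigr => k _; rewrite opprB.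
Qed.

Lemma ler_add_scaled_gt0 (a b k : R) : 0 <= k ->
  (forall eta, 0 < eta -> a <= b + k * eta) -> a <= b.
Proof.
move=> k0 h; apply/ler_addgt0Pr => e e0.
have k1 : 0 < k + 1 by lra.
apply: le_trans (h _ (divr_gt0 e0 k1)) _; rewrite lerD2l.
by rewrite mulrA ler_pdivrMr // mulrC ler_wpM2l; lra.
Qed.

Lemma ler_add_div_nat (A B c : R) :
  (forall N, (0 < N)%N -> B <= A + c / N%:R) -> B <= A.
Proof.
move=> h; apply/ler_addgt0Pr => e e0.
pose N := (Num.Def.archi_bound (`|c| / e)).+1.
have Npos : 0 < N%:R :> R by rewrite ltr0n.
apply: le_trans (h N isT) _; rewrite lerD2l.
apply: le_trans (ler_norm _) _; rewrite normrM normfV normr_nat.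
rewrite ler_pdivrMr // -ler_pdivrMl // mulrC.
apply: ltW; apply: lt_le_trans (archi_boundP _) _; first by rewrite divr_ge0 // ltW.
by rewrite ler_nat.
Qed.

Lemma glb_approx (T : Type) (P : T -> Prop) (f : T -> R) :
  (exists a, P a) -> (forall a, P a -> 0 <= f a) ->
  exists m, [/\ 0 <= m, forall a, P a -> m <= f a &
    forall eta, 0 < eta -> exists2 a, P a & f a < m + eta].
Proof.
move=> [a0 Pa0] f0.
pose E r := exists2 a, P a & r = - f a.
have Eb : bound E by exists 0 => _ [a Pa ->]; apply/RleP; rewrite oppr_le0 f0.
have [l [lub1 lub2]] := completeness E Eb (ex_intro _ _ (ex_intro2 _ _ _ Pa0 erefl)).
exists (- l); split.
- by rewrite oppr_ge0; apply/RleP/lub2 => _ [a Pa ->]; apply/RleP; rewrite oppr_le0 f0.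
- by move=> a Pa; rewrite lerNl; apply/RleP/lub1; exists a.
- move=> eta eta0; apply: Classical_Prop.NNPP => hno.
  suff /RleP : Rle l (l - eta) by rewrite RminusE; lra.
  apply: lub2 => _ [a Pa ->]; apply/RleP; rewrite RminusE lerNl opprB.
  by rewrite leNgt; apply/negP => h; apply: hno; exists a => //; lra.
Qed.

Lemma contraction_exp_le (v c : nat -> R) N : (forall k, 0 <= v k) ->
  (forall k, v k.+1 <= (1 - c k) * v k) -> v N * exp (\sum_(k < N) c k) <= v 0%N.
Proof.
move=> v0 hv; elim: N => [|N IH]; first by rewrite big_ord0 exp_0 mulr1.
rewrite big_ord_recr /= exp_plus; apply: le_trans IH.
have ec : 0 < exp (c N) by apply/RltP; exact: exp_pos.
have eS : 0 < exp (\sum_(k < N) c k) by apply/RltP; exact: exp_pos.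
have contract : (1 - c N) * exp (c N) <= 1.
  have /RleP := exp_ineq1_le (- c N); rewrite exp_Ropp RplusE RoppE R1E => h.
  by have := ler_wpM2r (ltW ec) h; rewrite mulVf ?gt_eqF.
rewrite RmultE mulrA mulrAC; apply: ler_wpM2r; first exact: ltW.
apply: le_trans (ler_wpM2r (ltW ec) (hv N)) _.
rewrite mulrAC -[leRHS]mul1r; apply: ler_wpM2r contract; exact: v0.
Qed.

(** * Quadratic forms *)

Definition vdot {n} (u v : 'cV[R]_n) : R := \sum_(i < n) u i ord0 * v i ord0.
Definition qform {n} (M : 'M[R]_n) (v : 'cV[R]_n) : R := vdot v (M *m v).
Definition psd {n} (M : 'M[R]_n) := M^T = M /\ forall v, 0 <= qform M v.

Section InnerProduct.
Variable n : nat.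
Implicit Types (u v w : 'cV[R]_n) (M : 'M[R]_n).

Lemma vdotC u v : vdot u v = vdot v u.
Proof. by apply: eq_bigr => i _; rewrite mulrC. Qed.

Lemma vdotDl u v w : vdot (u + v) w = vdot u w + vdot v w.
Proof. by rewrite /vdot -big_split; apply: eq_bigr => i _; rewrite !mxE mulrDl. Qed.

Lemma vdotDr u v w : vdot w (u + v) = vdot w u + vdot w v.
Proof. by rewrite vdotC vdotDl ![vdot _ w]vdotC. Qed.

Lemma vdotZl a u v : vdot (a *: u) v = a * vdot u v.
Proof. by rewrite /vdot mulr_sumr; apply: eq_bigr => i _; rewrite !mxE mulrA. Qed.

Lemma vdotZr a u v : vdot v (a *: u) = a * vdot v u.
Proof. by rewrite vdotC vdotZl vdotC. Qed.

Lemma vdotNl u v : vdot (- u) v = - vdot u v.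
Proof. by rewrite -scaleN1r vdotZl mulN1r. Qed.

Lemma vdotNr u v : vdot v (- u) = - vdot v u.
Proof. by rewrite vdotC vdotNl vdotC. Qed.

Lemma vdotBl u v w : vdot (u - v) w = vdot u w - vdot v w.
Proof. by rewrite vdotDl vdotNl. Qed.

Lemma vdotBr u v w : vdot w (u - v) = vdot w u - vdot w v.
Proof. by rewrite vdotDr vdotNr. Qed.

Lemma vdot0l u : vdot 0 u = 0.
Proof. by rewrite /vdot big1 // => i _; rewrite mxE mul0r. Qed.

Lemma vdot0r u : vdot u 0 = 0.
Proof. by rewrite vdotC vdot0l. Qed.

Lemma vdot_ge0 u : 0 <= vdot u u.
Proof. by apply: sumr_ge0 => i _; rewrite -expr2 sqr_ge0. Qed.

Lemma vdot_trmx u v : vdot u v = (u^T *m v) ord0 ord0.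
Proof. by rewrite mxE; apply: eq_bigr => i _; rewrite mxE. Qed.

Lemma vdot_mulmxr M u v : vdot u (M *m v) = vdot (M^T *m u) v.
Proof. by rewrite !vdot_trmx trmx_mul trmxK mulmxA. Qed.

Lemma sqnorm2E v : sqnorm2 v = vdot v v.
Proof. by []. Qed.

Lemma vdot_le_mean u v : vdot u v <= (vdot u u + vdot v v) / 2.
Proof.
have := vdot_ge0 (u - v); rewrite !vdotBl !vdotBr [vdot v u]vdotC => h.
rewrite ler_pdivlMr //; lra.
Qed.

Lemma vdot_addr_le u v : vdot (u + v) (u + v) <= 2 * vdot u u + 2 * vdot v v.
Proof.
have := vdot_ge0 (u - v); rewrite !vdotDl !vdotDr !vdotNl !vdotNr [vdot v u]vdotC; lra.
Qed.

Lemma coord_sqr_le_vdot v i : (v i ord0) ^+ 2 <= vdot v v.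
Proof.
rewrite /vdot (bigD1 i) //= -expr2 lerDl.
by apply: sumr_ge0 => j _; rewrite -expr2 sqr_ge0.
Qed.

Lemma vdot_le_coord_bound v c : (forall i, `|v i ord0| <= c) -> vdot v v <= n%:R * c ^+ 2.
Proof.
move=> hv; rewrite -sumr_const_ord.
apply: ler_sum => i _; have := hv i; rewrite ler_norml => /andP [h1 h2]; nra.
Qed.

Lemma qform_psdE M v : ((v^T *m M) *m v) ord0 ord0 = qform M v.
Proof. by rewrite /qform vdot_trmx mulmxA. Qed.

Lemma qformD M u v : M^T = M ->
  qform M (u + v) = qform M u + 2 * vdot u (M *m v) + qform M v.
Proof.
move=> hs; rewrite /qform mulmxDr !vdotDl !vdotDr.
have -> : vdot v (M *m u) = vdot u (M *m v) by rewrite vdot_mulmxr hs vdotC.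
ring.
Qed.

Lemma qformZ M a v : qform M (a *: v) = a ^+ 2 * qform M v.
Proof. by rewrite /qform -scalemxAr vdotZl vdotZr mulrA expr2. Qed.

Lemma qformN M v : qform M (- v) = qform M v.
Proof. by rewrite -scaleN1r qformZ expr2 mulN1r opprK mul1r. Qed.

Lemma qform_addr_le M u v : psd M -> qform M (u + v) <= 2 * qform M u + 2 * qform M v.
Proof.
move=> [hs hp]; have := hp (u - v); rewrite qformD // qformN qformD //.
rewrite mulmxN vdotNr; lra.
Qed.

Lemma vdot_sumr (u : 'cV[R]_n) k (w : nat -> 'cV[R]_n) :
  vdot u (\sum_(j < k) w j) = \sum_(j < k) vdot u (w j).
Proof. exact: (big_morph (vdot u) (fun x y => vdotDr x y u) (vdot0r u)). Qed.

Lemma vdot_suml (u : 'cV[R]_n) k (w : nat -> 'cV[R]_n) :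
  vdot (\sum_(j < k) w j) u = \sum_(j < k) vdot (w j) u.
Proof. by rewrite vdotC vdot_sumr; apply: eq_bigr => j _; rewrite vdotC. Qed.

Lemma vdot_sum_le k (w : nat -> 'cV[R]_n) :
  vdot (\sum_(j < k) w j) (\sum_(j < k) w j) <= k%:R * \sum_(j < k) vdot (w j) (w j).
Proof.
set S := \sum_(j < k) vdot (w j) (w j).
rewrite vdot_suml.
apply: le_trans (_ : _ <= \sum_(j < k) \sum_(l < k) (vdot (w j) (w j) + vdot (w l) (w l)) / 2) _.
  by apply: ler_sum => j _; rewrite vdot_sumr; apply: ler_sum => l _; apply: vdot_le_mean.
under eq_bigr => j _ do rewrite -mulr_suml big_split /= sumr_const_ord.
rewrite -mulr_suml big_split /= -mulr_sumr sumr_const_ord -/S; lra.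
Qed.

Lemma vdot_abs_le_coord_bound (u v : 'cV[R]_n) A B : (forall i, `|u i ord0| <= A) ->
  (forall i, `|v i ord0| <= B) -> `|vdot u v| <= n%:R * (A * B).
Proof.
move=> hu hv; rewrite -sumr_const_ord; apply: le_trans (ler_norm_sum _ _ _) _.
by apply: ler_sum => i _; rewrite normrM ler_pM.
Qed.

End InnerProduct.

Section Psd.
Variable n : nat.
Implicit Types (u v w : 'cV[R]_n) (M : 'M[R]_n).

Lemma psd_cauchy_schwarz M u v : psd M ->
  (vdot u (M *m v)) ^+ 2 <= qform M u * qform M v.
Proof.
move=> [hs hp].
set A := qform M v; set B := vdot u (M *m v); set C := qform M u.
have key t : 0 <= C + 2 * t * B + t ^+ 2 * A.
  have := hp (u + t *: v); rewrite qformD // qformZ -scalemxAr vdotZr.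
  by rewrite /A /B /C; congr (0 <= _); ring.
have A0 : 0 <= A by apply: hp.
have [Az|Anz] := eqVneq A 0.
  have [Bz|Bnz] := eqVneq B 0; first by rewrite Bz Az; lra.
  have := key (- (C + 1) / (2 * B)); rewrite Az mulr0 addr0.
  have -> : 2 * (- (C + 1) / (2 * B)) * B = - (C + 1) by field; rewrite Bnz.
  lra.
have Apos : 0 < A by rewrite lt_def Anz A0.
have := key (- B / A).
have -> : C + 2 * (- B / A) * B + (- B / A) ^+ 2 * A = (C * A - B ^+ 2) / A by field.
by rewrite pmulr_lge0 ?invr_gt0 // subr_ge0 mulrC.
Qed.

Lemma psd_sqr_le M c : psd M -> 0 <= c -> (forall v, qform M v <= c * vdot v v) ->
  forall v, vdot (M *m v) (M *m v) <= c * qform M v.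
Proof.
move=> hM c0 hc v; have [_ hp] := hM.
have CS := psd_cauchy_schwarz (M *m v) v hM.
have := hc (M *m v); have := hp v.
set X := vdot (M *m v) (M *m v); set q := qform M v => q0 h1.
have [Xz|Xnz] := eqVneq X 0; first by rewrite Xz mulr_ge0.
have Xpos : 0 < X by rewrite lt_def Xnz vdot_ge0.
rewrite -(ler_pM2r Xpos) -expr2; apply: le_trans CS _.
by rewrite [_ * X]mulrAC ler_wpM2r.
Qed.

Lemma unit_scale w : vdot w w != 0 -> exists2 t, 0 < t & t ^+ 2 * vdot w w = 1.
Proof.
move=> wnz; have w0 : 0 < vdot w w by rewrite lt_def wnz vdot_ge0.
exists (Num.sqrt (vdot w w))^-1; first by rewrite invr_gt0 sqrtr_gt0.
by rewrite exprVn sqr_sqrtr ?vdot_ge0 // mulVf.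
Qed.

Lemma psd_norm_mulmx_le M c m : psd M -> m <= c ->
  (forall w, qform M w <= c * vdot w w) -> (forall w, m * vdot w w <= qform M w) ->
  forall w, vdot (M *m w) (M *m w) <= m ^+ 2 * vdot w w + (c + m) * (qform M w - m * vdot w w).
Proof.
move=> [hs _] mc hc hm w.
pose N := M - m%:M.
have NE v : N *m v = M *m v - m *: v by rewrite mulmxBl mul_scalar_mx.
have qN v : qform N v = qform M v - m * vdot v v by rewrite /qform NE vdotBr vdotZr.
have hN : psd N.
  split; last by move=> v; rewrite qN subr_ge0.
  by rewrite linearB /= tr_scalar_mx hs.
have hcN : forall v, qform N v <= (c - m) * vdot v v.
  by move=> v; rewrite qN mulrBl lerD2r.
have NN := psd_sqr_le hN (ltac:(lra) : 0 <= c - m) hcN w.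
have qN0 : 0 <= qform N w by case: hN => _ ->.
have -> : M *m w = N *m w + m *: w by rewrite NE subrK.
rewrite -qN !vdotDl !vdotDr !vdotZl !vdotZr [vdot (N *m w) w]vdotC -/(qform N w).
have : m * qform N w <= c * qform N w by rewrite ler_wpM2r.
lra.
Qed.

Lemma psd_qform_lb M c e : psd M -> (forall v, qform M v <= c * vdot v v) -> 0 <= e ->
  (forall v, e ^+ 2 * vdot v v <= vdot (M *m v) (M *m v)) ->
  forall v, e * vdot v v <= qform M v.
Proof.
move=> hM hc e0 he v; have [_ hp] := hM.
have [v0|vnz] := eqVneq (vdot v v) 0; first by rewrite v0 mulr0.
have unitE w t : t ^+ 2 * vdot w w = 1 ->
    vdot (t *: w) (t *: w) = 1 /\ qform M (t *: w) = t ^+ 2 * qform M w.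
  by move=> ht; rewrite qformZ vdotZl vdotZr mulrA -expr2.
have [t0 _ /unitE [u1 _]] := unit_scale vnz.
(* [m] is the least eigenvalue of [M]; near-minimizers [w] of the form satisfy
   [|M w|^2 <= m^2 + o(1)], whence [e <= m]. *)
have [m [m0 m_le m_approx]] := glb_approx (P := fun w => vdot w w = 1) (f := qform M)
  (ex_intro _ _ u1) (fun w _ => hp w).
have m_lb w : m * vdot w w <= qform M w.
  have [w0|wnz] := eqVneq (vdot w w) 0; first by rewrite w0 mulr0.
  have [t t0' ht] := unit_scale wnz; have [uw qw] := unitE _ _ ht.
  have := m_le _ uw; rewrite qw => h.
  by apply: le_trans (ler_wpM2r (vdot_ge0 w) h) _; rewrite mulrAC ht mul1r.
have mc : m <= c by apply: le_trans (m_le _ u1) _; apply: le_trans (hc _) _; rewrite u1 mulr1.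
have em : e ^+ 2 <= m ^+ 2.
  have cm0 : 0 <= c + m by rewrite addr_ge0 // (le_trans m0 mc).
  apply: (ler_add_scaled_gt0 cm0).
  move=> eta eta0; have [w uw qw] := m_approx eta eta0.
  have := psd_norm_mulmx_le hM mc hc m_lb w; have := he w; rewrite uw !mulr1.
  have : (c + m) * (qform M w - m) <= (c + m) * eta by apply: ler_wpM2l; lra.
  lra.
by apply: le_trans (m_lb v); rewrite ler_wpM2r ?vdot_ge0 // -(ler_pXn2r (n := 2)).
Qed.

End Psd.

(** * Integrals of vectors and matrices *)

Lemma is_RInt_big (I : Type) (s : seq I) (f : I -> R -> R) (l : I -> R) a b :
  (forall j, is_RInt (f j) a b (l j)) ->
  is_RInt (fun t => \sum_(j <- s) f j t) a b (\sum_(j <- s) l j).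
Proof.
move=> hf; elim: s => [|j s IH].
  have := is_RInt_const a b (0 : R); rewrite scal_zero_r big_nil.
  by apply: is_RInt_ext => t _; rewrite big_nil.
have := is_RInt_plus _ _ _ _ _ _ (hf j) IH; rewrite big_cons.
by apply: is_RInt_ext => t _; rewrite big_cons.
Qed.

Lemma is_RInt_mulr (f : R -> R) (c l : R) a b :
  is_RInt f a b l -> is_RInt (fun t => f t * c) a b (l * c).
Proof.
move=> hf; rewrite mulrC; apply: (is_RInt_ext (fun t => scal c (f t))).
  by move=> t _; rewrite /scal /= /mult /= mulrC.
exact: is_RInt_scal.
Qed.

Lemma is_RInt_abs_le_const (f : R -> R) a b l K : a <= b -> is_RInt f a b l ->
  (forall t, a <= t <= b -> `|f t| <= K) -> `|l| <= (b - a) * K.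
Proof.
move=> ab hf hK; rewrite -(is_RInt_unique _ _ _ _ hf) -RabsE.
apply/RleP; apply: abs_RInt_le_const; [exact/RleP | by exists l |].
by move=> t [/RleP t1 /RleP t2]; apply/RleP; rewrite RabsE hK // t1 t2.
Qed.

Lemma is_RInt_subdivision (g : R -> R) (s : nat -> R) (l : nat -> R) m :
  (forall k, (k < m)%N -> is_RInt g (s k) (s k.+1) (l k)) ->
  is_RInt g (s 0%N) (s m) (\sum_(k < m) l k).
Proof.
elim: m => [|m IH] hl.
  by rewrite big_ord0; have := is_RInt_point g (s 0%N).
rewrite big_ord_recr /=; apply: is_RInt_Chasles (hl m (ltnSn m)).
by apply: IH => k km; apply: hl; apply: ltnW.
Qed.

Definition is_vRInt n (f : R -> 'cV[R]_n) a b (l : 'cV[R]_n) :=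
  forall i, is_RInt (fun t => f t i ord0) a b (l i ord0).

Section VectorIntegral.
Variable n : nat.
Implicit Types (f g : R -> 'cV[R]_n) (Q : R -> 'M[R]_n) (u v w : 'cV[R]_n).

Lemma is_RInt_vdot f a b l w : is_vRInt f a b l ->
  is_RInt (fun t => vdot w (f t)) a b (vdot w l).
Proof.
move=> hf; apply: is_RInt_big => i.
apply: (is_RInt_ext (fun t => f t i ord0 * w i ord0)); first by move=> t _; rewrite mulrC.
by rewrite mulrC; apply: is_RInt_mulr.
Qed.

Lemma is_vRInt_sub f g a b lf lg : is_vRInt f a b lf -> is_vRInt g a b lg ->
  is_vRInt (fun t => f t - g t) a b (lf - lg).
Proof.
move=> hf hg i; rewrite !mxE.
apply: (is_RInt_ext (fun t => minus (f t i ord0) (g t i ord0))).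
  by move=> t _; rewrite !mxE.
exact: is_RInt_minus (hf i) (hg i).
Qed.

Lemma is_vRInt_mulmx Q v a b : (forall i j, ex_RInt (fun t => Q t i j) a b) ->
  is_vRInt (fun t => Q t *m v) a b (mx_RInt Q a b *m v).
Proof.
move=> hQ i; rewrite mxE; apply: (is_RInt_ext (fun t => \sum_j Q t i j * v j ord0)).
  by move=> t _; rewrite mxE.
apply: is_RInt_big => j; rewrite mxE; apply: is_RInt_mulr; exact: RInt_correct.
Qed.

Lemma is_RInt_qform Q v a b : (forall i j, ex_RInt (fun t => Q t i j) a b) ->
  is_RInt (fun t => qform (Q t) v) a b (qform (mx_RInt Q a b) v).
Proof. by move=> hQ; apply: is_RInt_vdot; apply: is_vRInt_mulmx. Qed.

End VectorIntegral.

Section Qbar.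
Variable n : nat.
Implicit Types (M : 'M[R]_n) (v : 'cV[R]_n).

Lemma Qbar_psd M : Qbar M -> psd M.
Proof. by move=> [[h1 h2] _]; split => // v; rewrite -qform_psdE; apply/RleP. Qed.

Lemma Qbar_norm_le M v : Qbar M -> vdot (M *m v) (M *m v) <= vdot v v.
Proof.
move=> [_ h]; have := h v; rewrite /norm2 !sqnorm2E => /RleP.
by rewrite !RsqrtE ler_sqrt // vdot_ge0.
Qed.

Lemma Qbar_qform M v : Qbar M -> 0 <= qform M v <= vdot v v.
Proof.
move=> hM; apply/andP; split; first by case: (Qbar_psd hM) => _ ->.
apply: le_trans (vdot_le_mean _ _) _; have := Qbar_norm_le v hM; lra.
Qed.

Lemma Qbar_coord_le M v i : Qbar M -> `|(M *m v) i ord0| <= Num.sqrt (vdot v v).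
Proof.
move=> hM; rewrite -sqrtr_sqr ler_sqrt ?vdot_ge0 //.
exact: le_trans (coord_sqr_le_vdot _ _) (Qbar_norm_le v hM).
Qed.

Variable Q : R -> 'M[R]_n.
Hypothesis hQ : forall t, 0 <= t -> Qbar (Q t).
Hypothesis hI : riemann_integrable_nonneg Q.
Variables a b : R.
Hypotheses (a0 : 0 <= a) (ab : a <= b).

Let ex_Q i j : ex_RInt (fun t => Q t i j) a b.
Proof. by apply: hI; apply/RleP. Qed.

Let Qbar_open t : a < t -> Qbar (Q t).
Proof. by move=> at_; apply: hQ; apply: le_trans a0 (ltW at_). Qed.

Lemma psd_mx_RInt : psd (mx_RInt Q a b).
Proof.
split.
  apply/matrixP => i j; rewrite !mxE; apply: RInt_ext => t.
  rewrite Rmin_left ?Rmax_right; try exact/RleP.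
  by move=> [/RltP /Qbar_open [[hs _] _] _]; rewrite -{1}hs mxE.
move=> v; rewrite -(is_RInt_unique _ _ _ _ (is_RInt_qform (v := v) ex_Q)).
apply/RleP; apply: RInt_ge_0 => //; first exact/RleP.
  by exists (qform (mx_RInt Q a b) v); apply: is_RInt_qform.
by move=> t [/RltP h _]; apply/RleP; case/andP: (Qbar_qform v (Qbar_open h)).
Qed.

Lemma qform_mx_RInt_le v : qform (mx_RInt Q a b) v <= (b - a) * vdot v v.
Proof.
have := is_RInt_const a b (vdot v v); rewrite /scal /= /mult /= RminusE => hc.
apply/RleP; apply: is_RInt_le (is_RInt_qform (v := v) ex_Q) hc _; first exact/RleP.
by move=> t [/RltP h _]; apply/RleP; case/andP: (Qbar_qform v (Qbar_open h)).
Qed.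

End Qbar.

Lemma qform_mx_RInt_subdivision n (Q : R -> 'M[R]_n) (s : nat -> R) N v :
  riemann_integrable_nonneg Q -> (forall k, 0 <= s k) -> (forall k, s k <= s k.+1) ->
  qform (mx_RInt Q (s 0%N) (s N)) v = \sum_(k < N) qform (mx_RInt Q (s k) (s k.+1)) v.
Proof.
move=> hI s0 s_incr.
have ex_Q s' t : 0 <= s' -> s' <= t -> forall i j, ex_RInt (fun u => Q u i j) s' t.
  by move=> s'0 s't i j; apply: hI; apply/RleP.
have sN : s 0%N <= s N by elim: N => [|m IH] //; apply: le_trans IH (s_incr m).
have h1 := is_RInt_qform (v := v) (ex_Q _ _ (s0 0%N) sN).
have h2 : is_RInt (fun t => qform (Q t) v) (s 0%N) (s N)
    (\sum_(k < N) qform (mx_RInt Q (s k) (s k.+1)) v).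
  apply: (is_RInt_subdivision (l := fun k => qform (mx_RInt Q (s k) (s k.+1)) v)) => k _.
  by apply: is_RInt_qform; exact: ex_Q _ _ (s0 k) (s_incr k).
by rewrite -(is_RInt_unique _ _ _ _ h1) -(is_RInt_unique _ _ _ _ h2).
Qed.

(** * A discretized energy estimate *)

(* An Euler-type scheme [x k - x k.+1 = M k *m x k + r k] with remainder [r k]. *)
Section DiscreteEnergy.
Variables (n N : nat) (h Z W r2 : R).
Variables (x r : nat -> 'cV[R]_n) (M : nat -> 'M[R]_n).
Hypotheses (h0 : 0 < h) (r20 : 0 <= r2).
Hypothesis step : forall k, (k < N)%N -> x k - x k.+1 = M k *m x k + r k.
Hypothesis M_psd : forall k, (k < N)%N -> psd (M k).
Hypothesis M_le : forall k, (k < N)%N -> forall v, qform (M k) v <= h * vdot v v.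
Hypothesis incr_le : forall k, (k < N)%N -> vdot (x k - x k.+1) (x k - x k.+1) <= W.
Hypothesis r_le : forall k, (k < N)%N -> vdot (r k) (r k) <= r2.
Hypothesis cross_le : forall k, (k < N)%N -> `|vdot (x k) (r k)| <= Z.

Let E := \sum_(k < N) qform (M k) (x k).

Let E_ge0 : 0 <= E.
Proof. by apply: sumr_ge0 => k _; case: (M_psd (ltn_ord k)) => _ ->. Qed.

Lemma discrete_energy_telescope :
  2 * E - N%:R * (2 * Z + W) <= vdot (x 0%N) (x 0%N) - vdot (x N) (x N).
Proof.
rewrite (telescope_sumr_ord (fun k => vdot (x k) (x k))).
rewrite -[N%:R * _]sumr_const_ord /E mulr_sumr -sumrB; apply: ler_sum => k _.
have kN := ltn_ord k.
have -> : vdot (x k) (x k) - vdot (x k.+1) (x k.+1) =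
    2 * vdot (x k) (x k - x k.+1) - vdot (x k - x k.+1) (x k - x k.+1).
  by rewrite !vdotBl !vdotBr [vdot (x k.+1) (x k)]vdotC; ring.
rewrite step // vdotDr -step //.
have := incr_le kN; have := cross_le kN; rewrite ler_norml /qform => /andP[] //.
lra.
Qed.

Lemma discrete_incr_le k : (k < N)%N ->
  vdot (x k - x k.+1) (x k - x k.+1) <= 2 * h * qform (M k) (x k) + 2 * r2.
Proof.
move=> kN; rewrite step //; apply: le_trans (vdot_addr_le _ _) _.
have := psd_sqr_le (M_psd kN) (ltW h0) (M_le kN) (x k); have := r_le kN; lra.
Qed.

Lemma discrete_drift_le k : (k <= N)%N ->
  vdot (x 0%N - x k) (x 0%N - x k) <= N%:R * (2 * h * E + 2 * N%:R * r2).
Proof.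
move=> kN.
have -> : x 0%N - x k = \sum_(j < k) (x j - x j.+1).
  exact: telescope_sumr_ord.
apply: le_trans (vdot_sum_le k (fun j => x j - x j.+1)) _.
have kN' : k%:R <= N%:R :> R by rewrite ler_nat.
have sum_incr : \sum_(j < k) vdot (x j - x j.+1) (x j - x j.+1) <= 2 * h * E + 2 * N%:R * r2.
  have qE : \sum_(j < k) qform (M j) (x j) <= E.
    rewrite /E (big_ord_widen N (fun j => qform (M j) (x j)) kN) big_mkcond /=.
    apply: ler_sum => j _; case: ifP => // _.
    by case: (M_psd (ltn_ord j)) => _ ->.
  apply: le_trans (_ : _ <= \sum_(j < k) (2 * h * qform (M j) (x j) + 2 * r2)) _.
    by apply: ler_sum => j _; apply: discrete_incr_le; exact: leq_trans (ltn_ord j) kN.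
  rewrite big_split /= -mulr_sumr sumr_const_ord.
  have : 2 * h * \sum_(j < k) qform (M j) (x j) <= 2 * h * E.
    by apply: ler_wpM2l qE; rewrite mulr_ge0 // ltW.
  have : k%:R * (2 * r2) <= N%:R * (2 * r2) by apply: ler_wpM2r kN'; rewrite mulr_ge0.
  lra.
apply: le_trans (ler_wpM2l (ler0n _ _) sum_incr) _.
by apply: ler_wpM2r kN'; rewrite addr_ge0 // !mulr_ge0 ?ler0n ?E_ge0 // ltW.
Qed.

Lemma discrete_qform_start_le :
  \sum_(k < N) qform (M k) (x 0%N) <=
    2 * E + N%:R * (2 * h * (N%:R * (2 * h * E + 2 * N%:R * r2))).
Proof.
rewrite -[N%:R * _]sumr_const_ord /E mulr_sumr -big_split /=; apply: ler_sum => k _.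
have kN := ltn_ord k.
have -> : x 0%N = x k + (x 0%N - x k) by rewrite addrC subrK.
apply: le_trans (qform_addr_le _ _ (M_psd kN)) _.
have := M_le kN (x 0%N - x k).
have := ler_wpM2l (ltW h0) (discrete_drift_le (ltnW kN)).
rewrite -/E; lra.
Qed.

Lemma discrete_energy eps :
  eps * vdot (x 0%N) (x 0%N) <= \sum_(k < N) qform (M k) (x 0%N) ->
  (eps * vdot (x 0%N) (x 0%N) - 4 * h * N%:R ^+ 3 * r2) / (1 + 2 * (h * N%:R) ^+ 2)
    - N%:R * (2 * Z + W) <= vdot (x 0%N) (x 0%N) - vdot (x N) (x N).
Proof.
move=> excite.
have D0 : 0 < 1 + 2 * (h * N%:R) ^+ 2 by have := sqr_ge0 (h * N%:R); lra.
have key : eps * vdot (x 0%N) (x 0%N) - 4 * h * N%:R ^+ 3 * r2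
    <= (1 + 2 * (h * N%:R) ^+ 2) * (2 * E).
  have := le_trans excite discrete_qform_start_le.
  have -> : 2 * E + N%:R * (2 * h * (N%:R * (2 * h * E + 2 * N%:R * r2))) =
    (1 + 2 * (h * N%:R) ^+ 2) * (2 * E) + 4 * h * N%:R ^+ 3 * r2 by ring.
  lra.
have := discrete_energy_telescope.
have : (eps * vdot (x 0%N) (x 0%N) - 4 * h * N%:R ^+ 3 * r2)
    / (1 + 2 * (h * N%:R) ^+ 2) <= 2 * E by rewrite ler_pdivrMr // [2 * E * _]mulrC.
lra.
Qed.

End DiscreteEnergy.

(** * Energy decay of a solution over an exciting window *)

Section Solution.
Variables (n : nat) (Q : R -> 'M[R]_n) (x : R -> 'cV[R]_n).
Hypothesis hQ : forall t, 0 <= t -> Qbar (Q t).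
Hypothesis hI : riemann_integrable_nonneg Q.
Hypothesis hx : is_solution Q x.

Let ex_Q s t : 0 <= s -> s <= t -> forall i j, ex_RInt (fun u => Q u i j) s t.
Proof. by move=> s0 st i j; apply: hI; apply/RleP. Qed.

Lemma solution_increment s t : 0 <= s -> s <= t ->
  is_vRInt (fun u => Q u *m x u) s t (x s - x t).
Proof.
move=> s0 st i; set F := fun u => (Q u *m x u) i ord0.
have [exs xs] := hx i (elimT RleP s0).
have [ext xt] := hx i (elimT RleP (le_trans s0 st)).
have exst := ex_RInt_Chasles_2 _ _ _ _ (conj (elimT RleP s0) (elimT RleP st)) ext.
rewrite !mxE xs xt -/F -(RInt_Chasles F 0 s t exs exst) /plus /=.
have -> : x 0 i ord0 - RInt F 0 s - (x 0 i ord0 - (RInt F 0 s + RInt F s t)) = RInt F s t.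
  by ring.
exact: RInt_correct.
Qed.

Lemma solution_rate_bounded b : 0 <= b ->
  exists K, forall i t, 0 <= t <= b -> `|(Q t *m x t) i ord0| <= K.
Proof.
move=> b0; have /fin_all_exists [K hK] : forall i : 'I_n, exists K,
    forall t, 0 <= t <= b -> `|(Q t *m x t) i ord0| <= K.
  move=> i; have [exb _] := hx i (elimT RleP b0).
  have [K hK] := ex_RInt_ub _ _ _ exb; exists K => t /andP [t0 tb].
  rewrite -RabsE; apply/RleP/hK.
  by rewrite Rmin_left ?Rmax_right; [split; apply/RleP | apply/RleP..].
exists (\sum_i `|K i|) => i t tb; apply: le_trans (hK i t tb) _.
apply: le_trans (ler_norm _) _.
by rewrite (bigD1 i) //= lerDl sumr_ge0.
Qed.

Variables (b K : R).
Hypothesis hK : forall i t, 0 <= t <= b -> `|(Q t *m x t) i ord0| <= K.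

Lemma solution_lipschitz i s t : 0 <= s -> s <= t -> t <= b ->
  `|x s i ord0 - x t i ord0| <= K * (t - s).
Proof.
move=> s0 st tb; rewrite mulrC.
have -> : x s i ord0 - x t i ord0 = (x s - x t) i ord0 by rewrite !mxE.
have hinc := solution_increment s0 st; apply: (is_RInt_abs_le_const st (hinc i)).
by move=> u /andP [su ut]; apply: hK; rewrite (le_trans s0 su) (le_trans ut tb).
Qed.

Lemma solution_coord_le i s : 0 <= s -> s <= b ->
  `|x s i ord0| <= \sum_j `|x 0 j ord0| + K * b.
Proof.
move=> s0 sb; have K0 : 0 <= K by apply: le_trans (normr_ge0 _) (hK i (t := s) _); rewrite s0 sb.
have := solution_lipschitz i (lexx 0) s0 sb; rewrite subr0.
have : `|x s i ord0| <= `|x 0 i ord0| + `|x 0 i ord0 - x s i ord0|.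
  have {1}-> : x s i ord0 = x 0 i ord0 - (x 0 i ord0 - x s i ord0) by ring.
  exact: ler_normB.
have : `|x 0 i ord0| <= \sum_j `|x 0 j ord0| by rewrite (bigD1 i) //= lerDl sumr_ge0.
have : K * s <= K * b by apply: ler_wpM2l.
lra.
Qed.

Lemma solution_residual_coord_le i s t : 0 <= s -> s <= t -> t <= b ->
  `|(x s - x t - mx_RInt Q s t *m x s) i ord0| <= (t - s) * (Num.sqrt n%:R * (K * (t - s))).
Proof.
move=> s0 st tb.
have K0 : 0 <= K by apply: le_trans (normr_ge0 _) (hK i (t := s) _); rewrite s0 (le_trans st tb).
have hinc := solution_increment s0 st.
have hQx := is_vRInt_mulmx (v := x s) (ex_Q s0 st).
have hsub := is_vRInt_sub hinc hQx.
move: (hsub i) => /(is_RInt_abs_le_const st); apply => u /andP [su ut].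
rewrite -mulmxBr; apply: le_trans (Qbar_coord_le _ _ (hQ (le_trans s0 su))) _.
have : vdot (x u - x s) (x u - x s) <= n%:R * (K * (t - s)) ^+ 2.
  apply: vdot_le_coord_bound => j; rewrite !mxE distrC.
  apply: le_trans (solution_lipschitz j s0 su (le_trans ut tb)) _.
  by apply: ler_wpM2l => //; rewrite lerD2r.
move=> hv; apply: le_trans (_ : _ <= Num.sqrt (n%:R * (K * (t - s)) ^+ 2)) _.
  by rewrite ler_sqrt // mulr_ge0 ?ler0n ?sqr_ge0.
by rewrite sqrtrM ?ler0n // sqrtr_sqr ger0_norm // mulr_ge0 // subr_ge0.
Qed.



End Solution.

Section Energy.
Variables (n : nat) (Q : R -> 'M[R]_n) (x : R -> 'cV[R]_n).
Hypothesis hQ : forall t, 0 <= t -> Qbar (Q t).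
Hypothesis hI : riemann_integrable_nonneg Q.
Hypothesis hx : is_solution Q x.
Variables (a b eps : R).
Hypotheses (a0 : 0 <= a) (ab : a < b) (eps0 : 0 <= eps).
Hypothesis excite :
  forall v, eps ^+ 2 * vdot v v <= vdot (mx_RInt Q a b *m v) (mx_RInt Q a b *m v).

Let T := b - a.
Let V t := vdot (x t) (x t).

Section Subdivision.
Variable K : R.
Hypothesis hK : forall i t, 0 <= t <= b -> `|(Q t *m x t) i ord0| <= K.

Let sn : R := Num.sqrt n%:R.
Let X := \sum_j `|x 0 j ord0| + K * b.
Let res (h : R) := h * (sn * (K * h)).

Lemma solution_energy_subdivided N h : (0 < N)%N -> h * N%:R = T ->
  (eps * V a - 4 * h * N%:R ^+ 3 * (n%:R * res h ^+ 2)) / (1 + 2 * T ^+ 2)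
    - N%:R * (2 * (n%:R * (X * res h)) + n%:R * (K * h) ^+ 2) <= V a - V b.
Proof.
move=> N0 hN.
have Npos : 0 < N%:R :> R by rewrite ltr0n.
have h0 : 0 < h by rewrite -(pmulr_lgt0 _ Npos) hN subr_gt0.
pose s k := a + k%:R * h.
have sh k : s k.+1 - s k = h by rewrite /s -addn1 natrD; ring.
have s_incr k : s k <= s k.+1 by rewrite -subr_ge0 sh ltW.
have s_ge k : a <= s k by rewrite /s lerDl mulr_ge0 // ltW.
have s_ge0 k : 0 <= s k by apply: le_trans a0 (s_ge k).
have s_le k : (k <= N)%N -> s k <= b.
  move=> kN; have : k%:R * h <= h * N%:R.
    by rewrite mulrC; apply: ler_wpM2l; [exact: ltW | rewrite ler_nat].
  rewrite hN /T /s; lra.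
have s0 : s 0%N = a by rewrite /s mul0r addr0.
have sN : s N = b by rewrite /s mulrC hN /T addrC subrK.
pose r k := x (s k) - x (s k.+1) - mx_RInt Q (s k) (s k.+1) *m x (s k).
have := @discrete_energy n N h _ _ _ (x \o s) r (fun k => mx_RInt Q (s k) (s k.+1)) h0.
rewrite /= s0 sN hN; apply.
- by apply: mulr_ge0; rewrite ?ler0n ?sqr_ge0.
- by move=> k _; rewrite /r [RHS]addrC subrK.
- by move=> k _; apply: psd_mx_RInt.
- by move=> k _ v; rewrite -(sh k); apply: qform_mx_RInt_le.
- move=> k kN; apply: vdot_le_coord_bound => i; rewrite !mxE -(sh k).
  by have := solution_lipschitz hx hK i (s_ge0 k) (s_incr k) (s_le _ kN).
- move=> k kN; apply: vdot_le_coord_bound => i; rewrite -(sh k).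
  by have := solution_residual_coord_le hQ hI hx hK i (s_ge0 k) (s_incr k) (s_le _ kN).
- move=> k kN; apply: vdot_abs_le_coord_bound => i.
    by have := solution_coord_le hx hK i (s_ge0 k) (s_le _ (ltnW kN)).
  rewrite -(sh k).
  by have := solution_residual_coord_le hQ hI hx hK i (s_ge0 k) (s_incr k) (s_le _ kN).
- rewrite -(qform_mx_RInt_subdivision N (x a) hI s_ge0 s_incr) s0 sN.
  exact: psd_qform_lb (psd_mx_RInt hQ hI a0 (ltW ab)) (qform_mx_RInt_le hQ hI a0 (ltW ab))
    eps0 excite (x a).
Qed.

(* [C / N] bounds both error terms of [solution_energy_subdivided] for [h = T / N]. *)
Let C := 4 * n%:R * sn ^+ 2 * K ^+ 2 * T ^+ 5 + (2 * n%:R * X * sn * K + n%:R * K ^+ 2) * T ^+ 2.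

Lemma solution_energy_approx N : (0 < N)%N ->
  eps * V a / (1 + 2 * T ^+ 2) <= V a - V b + C / N%:R.
Proof.
move=> N0; have Npos : 0 < N%:R :> R by rewrite ltr0n.
have T0 : 0 < T by rewrite subr_gt0.
have hN : T / N%:R * N%:R = T by rewrite mulfVK // gt_eqF.
rewrite -lerBlDr; apply: le_trans (solution_energy_subdivided N0 hN); rewrite /res.
set P := 4 * _ * _ * _; set Err := N%:R * _.
have D1 : 1 <= 1 + 2 * T ^+ 2 by rewrite lerDl mulr_ge0 ?sqr_ge0.
have P0 : 0 <= P.
  have hT : 0 <= T / N%:R by rewrite divr_ge0 ?ler0n // ltW.
  rewrite /P; apply: mulr_ge0; last by apply: mulr_ge0; [rewrite ler0n | exact: sqr_ge0].
  by apply: mulr_ge0; [exact: mulr_ge0 (ler0n _ 4) hT | rewrite exprn_ge0 ?ler0n].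
have PD : P / (1 + 2 * T ^+ 2) <= P.
  by rewrite (ler_pdivrMr _ _ (lt_le_trans ltr01 D1)); exact: ler_peMr P0 D1.
have CPE : C / N%:R - (P + Err) =
    4 * n%:R * sn ^+ 2 * K ^+ 2 * T ^+ 5 * (N%:R - 1) / N%:R ^+ 2.
  by rewrite /C /P /Err; field; rewrite gt_eqF.
have : 0 <= 4 * n%:R * sn ^+ 2 * K ^+ 2 * T ^+ 5 * (N%:R - 1) / N%:R ^+ 2.
  apply: divr_ge0; last exact: sqr_ge0.
  apply: mulr_ge0; last by rewrite subr_ge0 ler1n.
  apply: mulr_ge0; last by rewrite exprn_ge0 // ltW.
  do 2 (apply: mulr_ge0; last exact: sqr_ge0).
  by rewrite mulr_ge0 ?ler0n.
rewrite mulrBl; lra.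
Qed.

End Subdivision.

Lemma solution_energy_decrease : eps * V a / (1 + 2 * T ^+ 2) <= V a - V b.
Proof.
have [K hK] := solution_rate_bounded hx (le_trans a0 (ltW ab)).
exact: ler_add_div_nat (fun N N0 => solution_energy_approx hK N0).
Qed.

End Energy.

(** * Convergence *)

Lemma sigma_min_sqr_le n (M : 'M[R]_n) (e : R) :
  0 <= e -> Rbar_le (Rbar.Finite e) (sigma_min M) ->
  forall v, e ^+ 2 * vdot v v <= vdot (M *m v) (M *m v).
Proof.
move=> e0 he v.
have [v0|vnz] := eqVneq (vdot v v) 0; first by rewrite v0 mulr0 vdot_ge0.
have [t t0 ht] := unit_scale vnz.
have unit_tv : norm2 (t *: v) = 1 by rewrite /norm2 sqnorm2E vdotZl vdotZr mulrA -expr2 ht sqrt_1.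
have [glb _] := Glb_Rbar_correct (fun r => exists v, norm2 v = 1 /\ r = norm2 (M *m v)).
have /RleP := Rbar_le_trans _ _ _ he (glb _ (ex_intro _ _ (conj unit_tv erefl))).
rewrite /norm2 sqnorm2E RsqrtE -scalemxAr vdotZl vdotZr mulrA -expr2 => le_e.
have := ler_pM e0 e0 le_e le_e.
rewrite -!expr2 sqr_sqrtr ?(mulr_ge0 (sqr_ge0 t) (vdot_ge0 _)) // => h.
apply: le_trans (ler_wpM2r (vdot_ge0 v) h) _.
by rewrite mulrAC ht mul1r.
Qed.

Lemma psd_excitation_le n (M : 'M[R]_n) c e : (0 < n)%N -> psd M -> 0 <= c -> 0 <= e ->
  (forall v, qform M v <= c * vdot v v) ->
  (forall v, e ^+ 2 * vdot v v <= vdot (M *m v) (M *m v)) -> e <= c.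
Proof.
move=> n0 hM c0 e0 hc he; pose v : 'cV[R]_n := const_mx 1.
have vpos : 0 < vdot v v.
  rewrite /vdot (eq_bigr (fun _ => 1)) => [|i _]; last by rewrite !mxE mulr1.
  by rewrite sumr_const_ord mulr1 ltr0n.
have : e ^+ 2 * vdot v v <= c ^+ 2 * vdot v v.
  apply: le_trans (he v) (le_trans (psd_sqr_le hM c0 hc v) _).
  by rewrite expr2 -mulrA ler_wpM2l.
by rewrite ler_pM2r // -ler_sqrt ?sqr_ge0 // !sqrtr_sqr !ger0_norm.
Qed.

Lemma delta_le e T : 0 < e -> 0 < T -> e <= T -> delta e T <= 2 * (e / (1 + 2 * T ^+ 2)).
Proof.
move=> e0 T0 eT; rewrite /delta !RealsE /= ge_min.
have T2 : 0 <= T ^+ 2 by exact: sqr_ge0.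
have D0 : 0 < 1 + 2 * T ^+ 2 by lra.
case: (lerP T 1) => hT; apply/orP; [left|right].
  rewrite -subr_ge0 (_ : 2 * (e / (1 + 2 * T ^+ 2)) - e / 2 =
     e * (3 - 2 * T ^+ 2) / (2 * (1 + 2 * T ^+ 2))); last by field; rewrite gt_eqF.
  apply: divr_ge0; last lra.
  apply: mulr_ge0; first lra.
  have : T ^+ 2 <= 1 by rewrite expr2; nra.
  lra.
have T5 : 0 < T ^+ 5 by rewrite exprn_gt0.
rewrite -subr_ge0 (_ : 2 * (e / (1 + 2 * T ^+ 2)) - e ^+ 3 / (240 * T ^+ 5) =
   e * (480 * T ^+ 5 - e ^+ 2 * (1 + 2 * T ^+ 2)) / (240 * T ^+ 5 * (1 + 2 * T ^+ 2))); last first.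
  by field; rewrite !gt_eqF //; apply: mulr_gt0.
apply: divr_ge0; last by apply: mulr_ge0; lra.
apply: mulr_ge0; first lra.
have e2 : e ^+ 2 <= T ^+ 2 by rewrite !expr2; apply: ler_pM => //; lra.
have t1 : e ^+ 2 * (1 + 2 * T ^+ 2) <= T ^+ 2 * (1 + 2 * T ^+ 2) by apply: ler_wpM2r => //; lra.
have t2 : 1 <= T ^+ 2 by rewrite expr2; nra.
have t3 : T ^+ 2 * (1 + 2 * T ^+ 2) <= 3 * T ^+ 4.
  have -> : T ^+ 4 = T ^+ 2 * T ^+ 2 by rewrite -exprD.
  nra.
have t4 : T ^+ 4 <= T ^+ 5 by rewrite (exprS T 4) ler_peMl // ?exprn_ge0 //; lra.
lra.
Qed.

Section Convergence.
Variables (n : nat) (Q : R -> 'M[R]_n) (x : R -> 'cV[R]_n).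
Hypothesis hQ : forall t, 0 <= t -> Qbar (Q t).
Hypothesis hI : riemann_integrable_nonneg Q.
Hypothesis hx : is_solution Q x.

Let V t := vdot (x t) (x t).

Lemma solution_sqnorm_nonincreasing s t : 0 <= s -> s <= t -> V t <= V s.
Proof.
move=> s0; rewrite le_eqVlt => /predU1P [-> //| st].
have := solution_energy_decrease hQ hI hx s0 st (lexx 0) _.
by rewrite expr0n /= !mul0r subr_ge0; apply => v; rewrite mul0r vdot_ge0.
Qed.

Variables (eps T : nat -> R).
Hypotheses (eps_gt0 : forall k, 0 < eps k) (T_gt0 : forall k, 0 < T k).
Hypothesis excite :
  forall k, Rbar_le (Rbar.Finite (eps k)) (sigma_min (mx_RInt Q (tseq T k) (tseq T k + T k))).

Let c k := eps k / (1 + 2 * T k ^+ 2).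

Lemma tseqS k : tseq T k.+1 = tseq T k + T k.
Proof. by rewrite /tseq big_ord_recr. Qed.

Lemma tseq_window_length k : tseq T k + T k - tseq T k = T k.
Proof. by rewrite addrC addKr. Qed.

Lemma tseq_ge0 k : 0 <= tseq T k.
Proof. by rewrite /tseq; apply: sumr_ge0 => j _; apply: ltW. Qed.

Let window_excite k v : eps k ^+ 2 * vdot v v <=
  vdot (mx_RInt Q (tseq T k) (tseq T k + T k) *m v) (mx_RInt Q (tseq T k) (tseq T k + T k) *m v).
Proof. exact: sigma_min_sqr_le (ltW (eps_gt0 k)) (excite k) v. Qed.

Lemma solution_sqnorm_window k : V (tseq T k.+1) <= (1 - c k) * V (tseq T k).
Proof.
have lt_kS : tseq T k < tseq T k + T k by rewrite ltrDl.
have := solution_energy_decrease hQ hI hx (tseq_ge0 k) lt_kS (ltW (eps_gt0 k)) (window_excite k).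
by rewrite ?RplusE tseq_window_length -tseqS /c /V mulrBl mul1r mulrAC; lra.
Qed.

(* For [n = 0], [sigma_min] is [+oo] and [eps k] is unconstrained. *)
Lemma excitation_le_window k : (0 < n)%N -> eps k <= T k.
Proof.
move=> n0; have kS : tseq T k <= tseq T k + T k by rewrite lerDl ltW.
have := qform_mx_RInt_le hQ hI (tseq_ge0 k) kS; rewrite tseq_window_length => hc.
exact: psd_excitation_le n0 (psd_mx_RInt hQ hI (tseq_ge0 k) kS) (ltW (T_gt0 k))
  (ltW (eps_gt0 k)) hc (window_excite k).
Qed.

Lemma solution_sqnorm_tseq_le N : V (tseq T N) * exp (\sum_(k < N) c k) <= V 0.
Proof.
have -> : V 0 = V (tseq T 0%N) by rewrite /tseq big_ord0.
apply: (contraction_exp_le (v := fun k => V (tseq T k))) => k; first exact: vdot_ge0.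
exact: solution_sqnorm_window.
Qed.

Hypothesis n0 : (0 < n)%N.
Hypothesis diverge : is_lim_seq (fun N => \sum_(k < N) delta (eps k) (T k)) p_infty.

Lemma solution_sqnorm_eventually_lt r : 0 < r -> exists t0, forall t, t0 <= t -> V t < r.
Proof.
move=> r0.
have [N0 HN0] := (is_lim_seq_spec _ _).2 diverge (2 * V 0 / r).
have /RltP delta_big := HN0 N0 (le_n N0).
set S := \sum_(k < N0) c k.
have S0 : 0 <= S.
  apply: sumr_ge0 => k _; apply: divr_ge0; first exact: ltW.
  by rewrite addr_ge0 ?ler01 // mulr_ge0 ?ler0n ?sqr_ge0.
have sum_delta : \sum_(k < N0) delta (eps k) (T k) <= 2 * S.
  rewrite /S mulr_sumr; apply: ler_sum => k _.
  exact: delta_le (eps_gt0 k) (T_gt0 k) (excitation_le_window k n0).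
have V0_lt : V 0 < S * r by move: (lt_le_trans delta_big sum_delta); rewrite ltr_pdivrMr //; lra.
have exp_ge : 1 + S <= exp S by have /RleP := exp_ineq1_le S; rewrite RplusE R1E.
have V_le : V (tseq T N0) * (1 + S) <= V 0.
  by apply: le_trans (solution_sqnorm_tseq_le N0); apply: ler_wpM2l; [exact: vdot_ge0|].
exists (tseq T N0) => t ht.
apply: le_lt_trans (solution_sqnorm_nonincreasing (tseq_ge0 N0) ht) _.
rewrite -(ltr_pM2r (_ : 0 < 1 + S)); last lra.
apply: le_lt_trans V_le (lt_le_trans V0_lt _); rewrite mulrC ler_wpM2l ?ltW //; lra.
Qed.

End Convergence.

Local Close Scope ring_scope.
Local Open Scope R_scope.

Theorem corollary1 (n : nat) (Q : R -> 'M[R]_n) :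
  (forall t : R, 0 <= t -> Qbar (Q t)) ->
  riemann_integrable_nonneg Q ->
  sufficiently_exciting Q ->
  forall x : R -> 'cV[R]_n, is_solution Q x ->
  forall i : 'I_n, is_lim (fun t => x t i ord0) p_infty 0.
Proof.
move=> hQ hI [eps [T [pos [excite diverge]]]] x hx i.
have hQ' t : (0 <= t)%R -> Qbar (Q t) by move/RleP; exact: hQ.
have n0 : (0 < n)%N := leq_ltn_trans (leq0n i) (ltn_ord i).
have eps_gt0 k : (0 < eps k)%R by apply/RltP; case: (pos k).
have T_gt0 k : (0 < T k)%R by apply/RltP; case: (pos k).
apply/is_lim_spec => r; have r0 : (0 < r :> R)%R by apply/RltP; exact: cond_pos.
have [t0 small] := solution_sqnorm_eventually_lt hQ' hI hx eps_gt0 T_gt0 excite n0 diverge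
  (exprn_gt0 2 r0).
exists t0 => t /RltP /ltW /small xt_small; apply/RltP.
rewrite RabsE RminusE R0E subr0 -(ltr_pXn2r (n := 2)) ?nnegrE ?normr_ge0 ?ltW //.
by rewrite real_normK ?num_real //; apply: le_lt_trans (coord_sqr_le_vdot _ _) xt_small.
Qed.
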